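(* Let $(\mathcal{S}_1,\mathcal{S}_2)$ be an $S$-pair, let $i\in\{1,2\}$, and let $A \in \mathcal{S}_i$ with $\alpha = |A|$. Suppose that for some $j \in \{1,\dots,\alpha-1\}$ and some $x \in A$, every $j$-element subset of $A - x$ lies in $\mathcal{S}_i$. Then every $j$-element subset of $A$ lies in $\mathcal{S}_i$.
   Context: Let $S$ be a finite nonempty set and $\mathcal{S}_1, \mathcal{S}_2 \subseteq 2^S$. The pair $(\mathcal{S}_1,\mathcal{S}_2)$ is an $S$-pair if: (S1) for $i=1,2$, if $A,B \in \mathcal{S}_i$ with $B \subset A$ and $|A| = |B|+1$, then every $|B|$-element subset of $A$ lies in $\mathcal{S}_i$; (S2) for $i=1,2$, if $A,B \in \mathcal{S}_i$ with $|A|=|B|$ and $|A\cap B| = |A|-1$, then $A\cup B \in \mathcal{S}_i$; (S3) for $i=1,2$, not every singleton $\{s\}$, $s\in S$, lies in $\mathcal{S}_i$, and $S \notin \mathcal{S}_i$; (S4) for $k = 1,\dots,|S|-1$ and $x\in S$, if every $k$-element subset of $S - x$ lies in $\mathcal{S}_1$, then not every $(|S|-k)$-element subset of $S-x$ lies in $\mathcal{S}_2$. *)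

From mathcomp Require Import all_boot.
Set Implicit Arguments. Unset Strict Implicit. Unset Printing Implicit Defensive.

Definition S1_ax (S : finType) (F : {set {set S}}) : Prop :=
  forall A B : {set S}, A \in F -> B \in F -> B \proper A -> #|A| = #|B|.+1 ->
    forall C : {set S}, C \subset A -> #|C| = #|B| -> C \in F.

Definition S2_ax (S : finType) (F : {set {set S}}) : Prop :=
  forall A B : {set S}, A \in F -> B \in F -> #|A| = #|B| ->
    #|A :&: B| = #|A| - 1 -> A :|: B \in F.

Definition S3_ax (S : finType) (F : {set {set S}}) : Prop :=
  ~ (forall s : S, [set s] \in F) /\ [set: S] \notin F.

Definition S4_ax (S : finType) (F1 F2 : {set {set S}}) : Prop :=
  forall (k : nat) (x : S), 1 <= k <= #|S| - 1 ->
    (forall B : {set S}, B \subset [set~ x] -> #|B| = k -> B \in F1) ->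
    ~ (forall B : {set S}, B \subset [set~ x] -> #|B| = #|S| - k -> B \in F2).

Definition S_pair (S : finType) (F1 F2 : {set {set S}}) : Prop :=
  (S1_ax F1 /\ S1_ax F2) /\ (S2_ax F1 /\ S2_ax F2) /\
  (S3_ax F1 /\ S3_ax F2) /\ S4_ax F1 F2.

From mathcomp Require Import all_boot.
From mathcomp Require Import zify.

Set Implicit Arguments.
Unset Strict Implicit.
Unset Printing Implicit Defensive.

(* Only the axioms (S1) and (S2) of the family F = S_i matter.
   (S2) pushes membership UP: if every k-subset of a set D lies in F (k >= 1),
   then so does every (k+1)-subset C of D, since C is the union of two of its
   k-subsets C - a, C - b meeting in k - 1 points; iterating, every subset of
   D of size >= k lies in F.
   (S1) pushes membership DOWN inside A: we show every C with C \subset A and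
   j <= |C| lies in F by induction on |A| - |C|.  Enlarge C by a point y of
   A to C' = C + y, which lies in F by induction.  If x \in C', then
   C' - x \subset A - x has size |C| >= j, hence lies in F by the upward
   step, and (S1) applied to C' - x \subset C' gives C \in F.  If x \notin C',
   then C itself is a subset of A - x of size >= j.
   The theorem is the case |C| = j. *)

Definition all_subsets_in (S : finType) (F : {set {set S}}) (D : {set S})
    (k : nat) : Prop :=
  forall B : {set S}, B \subset D -> #|B| = k -> B \in F.

Section Closure.
Variables (S : finType) (F : {set {set S}}).

Section Upward.
Hypothesis union_closed : S2_ax F.

(* A (k+1)-set is the union of two of its k-subsets sharing k - 1 points,
   so (S2) lifts membership of all k-subsets of D to all (k+1)-subsets. *)
Lemma all_subsets_in_succ (D : {set S}) (k : nat) :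
  0 < k -> all_subsets_in F D k -> all_subsets_in F D k.+1.
Proof.
move=> k_gt0 Dk C CD cardC.
have [a aC] : exists a, a \in C by apply/card_gt0P; rewrite cardC.
have card_Ca : #|C :\ a| = k by move: (cardsD1 a C); rewrite aC cardC; lia.
have [b /setD1P[ba bC]] : exists b, b \in C :\ a
  by apply/card_gt0P; rewrite card_Ca.
have card_Cb : #|C :\ b| = k by move: (cardsD1 b C); rewrite bC cardC; lia.
have sub_D z : C :\ z \subset D by apply: subset_trans CD; apply: subsetDl.
have -> : C = (C :\ a) :|: (C :\ b).
  apply/setP=> z; rewrite !inE.
  case: (eqVneq z a) => [->|_]; rewrite ?(eq_sym a) ?ba //=.
  by case: (z \in C); rewrite ?andbF.
apply: union_closed; rewrite ?card_Ca ?card_Cb //; try exact: Dk.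
have -> : (C :\ a) :&: (C :\ b) = C :\ a :\ b by rewrite setIDA setIDAC setIid.
by move: (cardsD1 b (C :\ a)); rewrite !inE ba bC card_Ca; lia.
Qed.

Lemma all_subsets_in_ge (D : {set S}) (k m : nat) :
  0 < k -> k <= m -> all_subsets_in F D k -> all_subsets_in F D m.
Proof.
move=> k_gt0 /subnK <-; elim: (m - k) => [|n IHn] Dk; first exact: Dk.
by rewrite addSn; apply: all_subsets_in_succ (IHn Dk); lia.
Qed.

End Upward.

Hypotheses (down_closed : S1_ax F) (union_closed : S2_ax F).

Lemma large_subsets_in (A : {set S}) (x : S) (j : nat) :
  A \in F -> 0 < j -> all_subsets_in F (A :\ x) j ->
  forall C : {set S}, C \subset A -> j <= #|C| -> C \in F.
Proof.
move=> AF j_gt0 Axj C.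
have [n] := ubnP (#|A| - #|C|); elim: n C => // n IHn C gap CA jC.
have large_Ax (D : {set S}) : D \subset A :\ x -> j <= #|D| -> D \in F.
  move=> DAx jD.
  exact: (all_subsets_in_ge union_closed j_gt0 jD Axj DAx (erefl _)).
have [AC | /subsetPn[y yA yC]] := boolP (A \subset C).
  by rewrite (_ : C = A) //; apply/eqP; rewrite eqEsubset CA.
set C' := y |: C.
have card_C' : #|C'| = #|C|.+1 by rewrite cardsU1 yC.
have C'A : C' \subset A by rewrite subUset sub1set yA CA.
have C'F : C' \in F.
  by apply: IHn; move: (subset_leq_card C'A); rewrite ?card_C' //; lia.
have CC' : C \subset C' by apply: subsetUr.
have [xC' | xC'] := boolP (x \in C').
- have card_C'x : #|C' :\ x| = #|C| by move: (cardsD1 x C'); rewrite xC'; lia.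
  have C'xF : C' :\ x \in F by rewrite large_Ax ?setSD ?card_C'x.
  apply: (down_closed C'F C'xF _ _ CC'); rewrite ?properD1 ?card_C'x //.
- apply: large_Ax => //; apply/subsetP=> z zC.
  rewrite in_setD1 (subsetP CA) // andbT.
  by apply: contraNneq xC' => <-; rewrite (subsetP CC').
Qed.

End Closure.

Theorem mainTheorem6 (S : finType) (F1 F2 : {set {set S}}) (i : bool)
    (A : {set S}) (j : nat) (x : S) :
  0 < #|S| ->
  S_pair F1 F2 ->
  let Fi := if i then F1 else F2 in
  A \in Fi ->
  1 <= j <= #|A| - 1 ->
  x \in A ->
  (forall B : {set S}, B \subset A :\ x -> #|B| = j -> B \in Fi) ->
  forall B : {set S}, B \subset A -> #|B| = j -> B \in Fi.
Proof.
move=> _ [[down1 down2] [[union1 union2] _]].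
have [down union] : S1_ax (if i then F1 else F2) /\ S2_ax (if i then F1 else F2)
  by case: i.
move=> Fi AF /andP[j_gt0 _] _ Axj B BA cardB.
by apply: (large_subsets_in down union AF j_gt0 Axj BA); rewrite cardB.
Qed.
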